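(* There exist finite alphabets $\Sigma,\Gamma$, a tier $\tau$ on $\Sigma\times\Gamma^*$ and an SFST $T$ with input alphabet $\Sigma$ and output alphabet $\Gamma$ that is $2$-TSSL on tier $\tau$, such that the function $f$ computed by $T$ is not $k$-TSSL on tier $\upsilon$ for any $k>0$ and any tier $\upsilon$ on $\Sigma\times\Gamma^*$.
   Context: Strings: $\lambda$ is the empty string; $\rtimes$ is a boundary symbol not in any alphabet. For $m\ge0$, $\mathrm{suff}^m(x)$ is the string of the last $m$ symbols of $\rtimes^mx$. $\mathrm{lcp}(A)$ is the longest common prefix of a set of strings $A$. An SFST is $T=\langle Q,\Sigma,\Gamma,q_0,\to,\sigma\rangle$ with finite state set $Q$, start state $q_0$, transition function $\to:Q\times\Sigma\to Q\times\Gamma^*$ and final output function $\sigma:Q\to\Gamma^*$. Write $q\xrightarrow{a:y}r$ if $\to(q,a)=\langle r,y\rangle$, extended to strings by $q\xrightarrow{\lambda:\lambda}q$ and composition (concatenating outputs). $T$ computes $f$ if $f(x)=y\sigma(q)$ whenever $q_0\xrightarrow{x:y}q$. (No onwardness is required of $T$.) A tier on a (possibly infinite) alphabet $A$ is a homomorphism $\tau:A^*\to A^*$ with $\tau(a)\in\{a,\lambda\}$ for each $a\in A$; it is extended to $\rtimes$ by $\tau(\rtimes)=\rtimes$. Actions of an SFST $T$: $\mathbb{A}_T:=\{\langle x,y\rangle\mid\exists q\,\exists r.\ \to(q,x)=\langle r,y\rangle\}$, written $x:y$. $T$ is $k$-TSSL on a tier $\tau$ on $\Sigma\times\Gamma^*$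 if $Q=(\{\rtimes\}\cup\mathbb{A}_T)^{k-1}$, $q_0=\rtimes^{k-1}$, and for every $q\in Q$, if $\to(q,x)=\langle r,y\rangle$ then $r=\mathrm{suff}^{k-1}(\tau(q(x:y)))$. For $f:\Sigma^*\to\Gamma^*$: $f^{\gets}(x):=\mathrm{lcp}(\{f(xy)\mid y\in\Sigma^*\})$; $f^{\to}_x$ is defined by $f(xy)=f^{\gets}(x)f^{\to}_x(y)$. Actions of $f$: $\mathbb{A}_f:=\{\langle x,y\rangle\in\Sigma\times\Gamma^*\mid\exists z.\ f^{\gets}(zx)=f^{\gets}(z)y\}$. Run $f^{\Leftarrow}(x)$: if $|x|\le1$, $f^{\Leftarrow}(x):=x:f^{\gets}(x)$; if $x=yz$ with $|y|\ge1$, $|z|=1$, $f^{\Leftarrow}(x):=f^{\Leftarrow}(y)(z:w)$ where $f^{\gets}(x)=f^{\gets}(y)w$. The function $f$ is $k$-TSSL on a tier $\upsilon$ on $\Sigma\times\Gamma^*$ if for all $x,y\in\Sigma^*$, $\mathrm{suff}^{k-1}(\upsilon(f^{\Leftarrow}(x)))=\mathrm{suff}^{k-1}(\upsilon(f^{\Leftarrow}(y)))$ implies $f^{\to}_x=f^{\to}_y$. *)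

From mathcomp Require Import all_boot.
From Stdlib Require Import ClassicalEpsilon.
Set Implicit Arguments. Unset Strict Implicit. Unset Printing Implicit Defensive.

(* The boundary symbol ⋊ is encoded as [None]; ordinary symbols as [Some a]. *)
Definition suffm (A : Type) (m : nat) (x : seq (option A)) : seq (option A) :=
  drop (size x) (nseq m None ++ x).

Definition is_tier (A : Type) (tau : seq A -> seq A) : Prop :=
  (forall u v, tau (u ++ v) = tau u ++ tau v) /\
  (forall a, tau [:: a] = [:: a] \/ tau [:: a] = [::]).

Definition tier_ext (A : Type) (tau : seq A -> seq A) (s : seq (option A))
  : seq (option A) :=
  flatten (map (fun o => match o with
                         | None => [:: None]
                         | Some a => map Some (tau [:: a])
                         end) s).

Record sfst (Sigma Gamma : Type) := Sfst {
  st : finType;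
  q0 : st;
  delta : st -> Sigma -> st * seq Gamma;
  sigma_out : st -> seq Gamma
}.

Fixpoint sfst_run (Sigma Gamma : Type) (T : sfst Sigma Gamma) (q : st T)
  (x : seq Sigma) : st T * seq Gamma :=
  match x with
  | [::] => (q, [::])
  | a :: x' => let: (r, y) := delta q a in
               let: (r', y') := sfst_run r x' in (r', y ++ y')
  end.

Definition sfst_fun (Sigma Gamma : Type) (T : sfst Sigma Gamma)
  (x : seq Sigma) : seq Gamma :=
  let: (q, y) := sfst_run (q0 T) x in y ++ sigma_out q.

Definition sfst_action (Sigma Gamma : Type) (T : sfst Sigma Gamma)
  (a : Sigma * seq Gamma) : Prop :=
  exists q : st T, (delta q a.1).2 = a.2.

(* T is k-TSSL on tier tau: Q = ({⋊} ∪ A_T)^(k-1) (via the injective labelling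
   [lab], whose image is exactly that set), q0 = ⋊^(k-1), and
   ->(q,x) = <r,y> implies r = suff^(k-1)(tau(q (x:y))). *)
Definition sfst_kTSSL (Sigma Gamma : finType) (k : nat)
  (tau : seq (Sigma * seq Gamma) -> seq (Sigma * seq Gamma))
  (T : sfst Sigma Gamma) : Prop :=
  exists lab : st T -> seq (option (Sigma * seq Gamma)),
    injective lab /\
    (forall s, (exists q, lab q = s) <->
               (size s = k.-1 /\ forall a, Some a \in s -> sfst_action T a)) /\
    lab (q0 T) = nseq k.-1 None /\
    (forall q a,
        lab (delta q a).1 =
        suffm k.-1 (tier_ext tau (rcons (lab q) (Some (a, (delta q a).2))))).

Definition is_lcp (Gamma : Type) (P : seq Gamma -> Prop) (p : seq Gamma) : Prop :=
  (forall s, P s -> exists t, s = p ++ t) /\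
  (forall p', (forall s, P s -> exists t, s = p' ++ t) -> exists t, p = p' ++ t).

Definition fgets (Sigma Gamma : Type) (f : seq Sigma -> seq Gamma)
  (x : seq Sigma) : seq Gamma :=
  epsilon (inhabits [::]) (is_lcp (fun s => exists y, s = f (x ++ y))).

(* f^->_x, defined by f(xy) = f^<-(x) f^->_x(y) *)
Definition fto (Sigma Gamma : Type) (f : seq Sigma -> seq Gamma)
  (x : seq Sigma) : seq Sigma -> seq Gamma :=
  fun y => drop (size (fgets f x)) (f (x ++ y)).

(* The run f^<=(x).  Its symbols are pairs (input of length <= 1, output):
   [None] input encodes the pseudo-action λ : f^<-(λ) of the empty run. *)
Definition frun (Sigma Gamma : Type) (f : seq Sigma -> seq Gamma)
  (x : seq Sigma) : seq (option Sigma * seq Gamma) :=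
  match x with
  | [::] => [:: (None, fgets f [::])]
  | _ =>
    map (fun p : Sigma * nat =>
           (Some p.1,
            if p.2 == 1 then fgets f (take 1 x)
            else drop (size (fgets f (take p.2.-1 x))) (fgets f (take p.2 x))))
        (zip x (iota 1 (size x)))
  end.

(* Application of a tier ups on Sigma x Gamma^* to a run; the pseudo-action
   λ:w (only occurring in f^<=(λ)) is kept iff [b]. *)
Definition tier_run (Sigma Gamma : Type)
  (ups : seq (Sigma * seq Gamma) -> seq (Sigma * seq Gamma)) (b : bool)
  (r : seq (option Sigma * seq Gamma)) : seq (option (option Sigma * seq Gamma)) :=
  flatten (map (fun p : option Sigma * seq Gamma =>
                  match p.1 with
                  | Some a => map (fun q : Sigma * seq Gamma => Some (Some q.1, q.2))
                                  (ups [:: (a, p.2)])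
                  | None => if b then [:: Some p] else [::]
                  end) r).

Definition fun_kTSSL (Sigma Gamma : Type) (k : nat)
  (ups : seq (Sigma * seq Gamma) -> seq (Sigma * seq Gamma)) (b : bool)
  (f : seq Sigma -> seq Gamma) : Prop :=
  forall x y : seq Sigma,
    suffm k.-1 (tier_run ups b (frun f x)) = suffm k.-1 (tier_run ups b (frun f y)) ->
    fto f x = fto f y.

(* Read a = false and b = true.  The transducer answers the a's alternately
   with a:aa and a:λ and pays an owed a at the end, so for n >= 1 the value
   f(a^n) = a^(n+1) is also f^<-(a^n), and the run of f on a^(n+1) is a:aa
   followed by n copies of a:a.  On any tier, the last k-1 symbols of the runs
   on a^(k+1) and a^(k+2) are therefore equal.  But f(a^n b) is a^(n+1) bb or
   a^(n+1) b according to the parity of n, so the tails of f after a^(k+1) and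
   a^(k+2) differ.  The transducer itself only has to remember its last action,
   so it is 2-TSSL on the identity tier. *)

From mathcomp Require Import all_boot zify.
From Stdlib Require Import ClassicalEpsilon.

Set Implicit Arguments.
Unset Strict Implicit.
Unset Printing Implicit Defensive.

Section SfstOutput.
Variables (Sigma Gamma : Type) (T : sfst Sigma Gamma).

Definition sfst_out (q : st T) (x : seq Sigma) : seq Gamma :=
  let: (r, y) := sfst_run q x in y ++ sigma_out r.

Lemma sfst_run_cat (q : st T) x y :
  sfst_run q (x ++ y) =
  ((sfst_run (sfst_run q x).1 y).1,
   (sfst_run q x).2 ++ (sfst_run (sfst_run q x).1 y).2).
Proof.
elim: x q => [|a x IHx] q /=; first by case: (sfst_run q y).
case: (delta q a) => r w; rewrite IHx.
by case: (sfst_run r x) => r' w' /=; rewrite catA.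
Qed.

Lemma sfst_out_cat (q : st T) x y :
  sfst_out q (x ++ y) = (sfst_run q x).2 ++ sfst_out (sfst_run q x).1 y.
Proof.
rewrite /sfst_out sfst_run_cat.
by case: (sfst_run q x) => r w /=; case: (sfst_run r y) => r' w'; rewrite catA.
Qed.

End SfstOutput.

Section LongestCommonPrefix.
Variables (Sigma Gamma : Type).

Lemma is_lcp_unique (P : seq Gamma -> Prop) p p' :
  is_lcp P p -> is_lcp P p' -> p = p'.
Proof.
move=> [Pp lcp_p] [Pp' lcp_p'].
have [t p'E] := lcp_p' _ Pp; have [t' pE] := lcp_p _ Pp'.
have /size0nil t0 : size t = 0.
  by move/(congr1 size): pE; rewrite p'E !size_cat; lia.
by rewrite p'E t0 cats0.
Qed.

Lemma fgets_eq (f : seq Sigma -> seq Gamma) x p :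
  is_lcp (fun s => exists y, s = f (x ++ y)) p -> fgets f x = p.
Proof.
by move=> lcp_p; apply: (is_lcp_unique _ lcp_p); apply: epsilon_spec; exists p.
Qed.

Lemma fgets_prefix (f : seq Sigma -> seq Gamma) x :
  (forall y, exists t, f (x ++ y) = f x ++ t) -> fgets f x = f x.
Proof.
move=> prefix_fx; apply: fgets_eq; split=> [s [y ->] | p' prefix_p'].
  exact: prefix_fx.
by have [t] := prefix_p' _ (ex_intro _ [::] erefl); rewrite cats0; exists t.
Qed.

End LongestCommonPrefix.

Lemma flatten_nseq_nil (T : Type) m : flatten (nseq m [::]) = [::] :> seq T.
Proof. by elim: m. Qed.

Lemma flatten_nseq1 (T : Type) (c : T) m : flatten (nseq m [:: c]) = nseq m c.
Proof. by elim: m => //= m ->. Qed.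

Lemma drop_nseq_cat (T : Type) (x : T) n j s : drop (n + j) (nseq n x ++ s) = drop j s.
Proof. by elim: n. Qed.

Section Suffixes.
Variable A : Type.

Lemma suffm1_rcons (s : seq (option A)) e : suffm 1 (rcons s e) = [:: e].
Proof. by rewrite /suffm size_rcons -cats1 /= drop_size_cat. Qed.

Lemma suffm_cat_nseq j (p : seq (option A)) c m :
  j <= m -> suffm j (p ++ nseq m c) = nseq j c.
Proof.
move=> le_jm; rewrite /suffm -(subnK le_jm) nseqD !catA.
by rewrite drop_size_cat // !size_cat !size_nseq; lia.
Qed.

Lemma suffm_cat_flatten_nseq j (p s : seq (option A)) m n :
  size s <= 1 -> j <= m -> j <= n ->
  suffm j (p ++ flatten (nseq m s)) = suffm j (p ++ flatten (nseq n s)).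
Proof.
case: s => [|c []] // _ le_jm le_jn; first by rewrite !flatten_nseq_nil.
by rewrite !flatten_nseq1 !suffm_cat_nseq.
Qed.

End Suffixes.

Lemma is_tier_id (A : Type) : is_tier (@id (seq A)).
Proof. by split=> // a; left. Qed.

Lemma tier_ext_id (A : Type) (s : seq (option A)) : tier_ext id s = s.
Proof. by elim: s => [|[a|] s IHs] //=; rewrite /tier_ext /= in IHs *; rewrite IHs. Qed.

Section TierRun.
Variables (Sigma Gamma : Type) (b : bool).
Variable ups : seq (Sigma * seq Gamma) -> seq (Sigma * seq Gamma).

Lemma size_tier_run1 c : is_tier ups -> size (tier_run ups b [:: c]) <= 1.
Proof.
case=> _ ups1; rewrite /tier_run /= cats0.
by case: c.1 => [a|]; [case: (ups1 (a, c.2)) => -> | case: b].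
Qed.

Lemma tier_run_cons_nseq c0 c m :
  tier_run ups b (c0 :: nseq m c) =
  tier_run ups b [:: c0] ++ flatten (nseq m (tier_run ups b [:: c])).
Proof. by rewrite /tier_run /= map_nseq !cats0. Qed.

End TierRun.

Section ConstantRuns.
Variables (Sigma Gamma : Type) (f : seq Sigma -> seq Gamma) (a : Sigma).

Lemma frun_nseq (w0 w : seq Gamma) m :
  (forall n, fgets f (nseq n.+1 a) = w0 ++ flatten (nseq n w)) ->
  frun f (nseq m.+1 a) = (Some a, w0) :: nseq m (Some a, w).
Proof.
have zip_nseq (s : seq nat) : zip (nseq (size s) a) s = map (pair a) s.
  by elim: s => //= i s ->.
have map_const (s : seq nat) : map (fun=> (Some a, w)) s = nseq (size s) (Some a, w).
  by elim: s => //= i s ->.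
move=> fgetsE; rewrite /frun /= take0 -[[:: a]]/(nseq 1 a) fgetsE cats0.
rewrite size_nseq -[m in zip (nseq m _) _](size_iota 2 m) zip_nseq -map_comp; congr (_ :: _).
rewrite -[m in RHS](size_iota 2) -map_const; apply/eq_in_map => i.
rewrite mem_iota; case: i => [|[|j]] //= ltjm.
rewrite !take_nseq; [|lia..].
rewrite -[a :: nseq j a]/(nseq j.+1 a) -[a :: _]/(nseq j.+2 a) !fgetsE.
by rewrite -addn1 nseqD flatten_cat catA drop_size_cat //= cats0.
Qed.

Lemma not_fun_kTSSL_of_constant_runs (w0 w : seq Gamma) :
  (forall m, frun f (nseq m.+1 a) = (Some a, w0) :: nseq m (Some a, w)) ->
  (forall m, fto f (nseq m.+1 a) <> fto f (nseq m.+2 a)) ->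
  forall k ups, is_tier ups -> forall b, ~ fun_kTSSL k ups b f.
Proof.
move=> frunE fto_neq k ups ups_tier b f_kTSSL; apply: (fto_neq k).
apply: f_kTSSL; rewrite !frunE !tier_run_cons_nseq.
apply: suffm_cat_flatten_nseq; first exact: size_tier_run1.
  exact: leq_pred.
exact: leq_trans (leq_pred k) (leqnSn k).
Qed.

End ConstantRuns.

(* The states are [None] (start) and [Some (x, c)], named by the action that
   enters them: [x] is the symbol just read and [c] records that it followed
   the action a:aa.  The four actions are a:aa, a:λ (an a is now owed, paid by
   σ or by the next b:ab), b:bb and b:ab. *)
Definition parity_action (s : bool * bool) : bool * seq bool :=
  let: (x, c) := s in
  (x, if x then [:: c; true] else if c then [::] else [:: false; false]).

Definition parity_next (q : option (bool * bool)) (x : bool) : bool * bool :=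
  (x, q == Some (false, false)).

Definition parity_sfst : sfst bool bool :=
  @Sfst bool bool (option (bool * bool)) None
    (fun q x => (Some (parity_next q x), (parity_action (parity_next q x)).2))
    (fun q => if q == Some (false, true) then [:: false] else [::]).

Definition parity_label (q : option (bool * bool)) : seq (option (bool * seq bool)) :=
  [:: omap parity_action q].

Lemma parity_action_inj : injective parity_action.
Proof. by case=> [[] []] [[] []]. Qed.

Lemma parity_sfst_action a :
  sfst_action parity_sfst a <-> exists s, parity_action s = a.
Proof.
case: a => x w; split=> [[q /= <-] | [[x' c] <-]]; first by exists (parity_next q x).
by exists (if c then Some (false, false) else None); case: x'; case: c.
Qed.

Lemma parity_sfst_2TSSL : sfst_kTSSL 2 id parity_sfst.
Proof.
exists parity_label; split; [|split; [|split]] => //.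
- by move=> [s|] [s'|] // [] /parity_action_inj ->.
- move=> l; split=> [[q <-] | [size_l actions_l]].
    split=> // a; case: q => [s|] //=; rewrite inE => /eqP[->].
    by apply/parity_sfst_action; exists s.
  case: l size_l actions_l => [|[a|] []] //= _ actions_l; last by exists None.
  have [s <-] := (parity_sfst_action a).1 (actions_l a (mem_head _ _)).
  by exists (Some s).
- by move=> q x; rewrite tier_ext_id suffm1_rcons.
Qed.

Lemma parity_run_nseq n :
  sfst_run (q0 parity_sfst) (nseq n.+1 false) =
  (Some (false, odd n), nseq (n.+1 + ~~ odd n) false).
Proof.
elim: n => [//|n IHn].
rewrite -addn1 nseqD sfst_run_cat IHn /= /parity_next /=.
case: (odd n) => /=; rewrite ?cats0 ?addn0 ?addn1 //.
by rewrite -[[:: _; _]]/(nseq 2 false) -nseqD addn2.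
Qed.

Lemma parity_fun_nseq_cat n z :
  sfst_fun parity_sfst (nseq n.+1 false ++ z) =
  nseq (n.+1 + ~~ odd n) false ++ sfst_out (Some (false, odd n) : st parity_sfst) z.
Proof. by rewrite [sfst_fun _ _]sfst_out_cat parity_run_nseq. Qed.

Lemma parity_out_owed z : exists t,
  sfst_out (Some (false, true) : st parity_sfst) z = false :: t.
Proof.
case: z => [|x z]; first by exists [::].
by rewrite -cat1s sfst_out_cat; case: x; eexists.
Qed.

Lemma parity_fun_nseq n : sfst_fun parity_sfst (nseq n.+1 false) = nseq n.+2 false.
Proof.
rewrite -[nseq n.+1 false]cats0 parity_fun_nseq_cat /sfst_out.
case: (odd n) => /=; first by rewrite addn0 -[[:: false]]/(nseq 1 false) -nseqD addn1.
by rewrite cats0 addn1.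
Qed.

Lemma parity_fgets_nseq n :
  fgets (sfst_fun parity_sfst) (nseq n.+1 false) = nseq n.+2 false.
Proof.
rewrite fgets_prefix ?parity_fun_nseq // => z.
rewrite parity_fun_nseq_cat.
case: (odd n); last by rewrite addn1; eexists.
have [t ->] := parity_out_owed z; exists t.
by rewrite addn0 -cat1s catA -[[:: false]]/(nseq 1 false) -nseqD addn1.
Qed.

Lemma parity_frun_nseq m :
  frun (sfst_fun parity_sfst) (nseq m.+1 false) =
  (Some false, [:: false; false]) :: nseq m (Some false, [:: false]).
Proof.
by apply: frun_nseq => n; rewrite parity_fgets_nseq flatten_nseq1.
Qed.

Lemma parity_fto_nseq n :
  fto (sfst_fun parity_sfst) (nseq n.+1 false) [:: true] =
  if odd n then [:: true] else [:: true; true].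
Proof.
rewrite /fto parity_fgets_nseq size_nseq parity_fun_nseq_cat /sfst_out.
case: (odd n) => /=; first by rewrite addn0 -addn1 drop_nseq_cat.
by rewrite drop_size_cat ?eqxx // size_nseq addn1.
Qed.

Theorem proposition19 :
  exists (Sigma Gamma : finType)
         (tau : seq (Sigma * seq Gamma) -> seq (Sigma * seq Gamma))
         (T : sfst Sigma Gamma),
    is_tier tau /\ sfst_kTSSL 2 tau T /\
    (forall (k : nat), 0 < k ->
     forall ups : seq (Sigma * seq Gamma) -> seq (Sigma * seq Gamma),
       is_tier ups -> forall b : bool, ~ fun_kTSSL k ups b (sfst_fun T)).
Proof.
exists bool, bool, id, parity_sfst.
split; [exact: is_tier_id | split; first exact: parity_sfst_2TSSL].
move=> k _; apply: (not_fun_kTSSL_of_constant_runs parity_frun_nseq).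
move=> m /(congr1 (fun g => g [:: true])); rewrite !parity_fto_nseq /=.
by case: (odd m).
Qed.
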